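(* For every integral domain $D$ and semistar operation $\star$ on $D$, $$\widetilde{\star}\text{-}\dim_v(D)=\sup\{\dim_v(D_P)\mid P\in\operatorname{QSpec}^{\widetilde{\star}}(D)\}.$$
   Context: $D$ is an integral domain with quotient field $K$; $f(D)$ denotes the nonzero finitely generated fractional ideals, $\overline{\mathcal F}(D)$ the nonzero $D$-submodules of $K$. A semistar operation $\star$ on $D$ is a map $\overline{\mathcal F}(D)\to\overline{\mathcal F}(D)$ with $(xE)^\star=xE^\star$ ($0\neq x\in K$), $E\subseteq F\Rightarrow E^\star\subseteq F^\star$, $E\subseteq E^\star=(E^\star)^\star$. $E^{\star_f}:=\bigcup\{F^\star:F\in f(D),F\subseteq E\}$. A nonzero ideal $I$ is a quasi-$\star$-ideal if $I^\star\cap D=I$; quasi-$\star$-primes/quasi-$\star$-maximal ideals are the prime ones / maximal proper ones; sets $\operatorname{QSpec}^\star(D)$, $\operatorname{QMax}^\star(D)$. $E^{\widetilde\star}:=\bigcap\{ED_M:M\in\operatorname{QMax}^{\star_f}(D)\}$ ($=K$ if empty). A valuation overring $V$ of $D$ is a $\star$-valuation overring if $F^\star\subseteq FV$ for all $F\in f(D)$. $\star$-$\dim_v(D):=\sup\{\dim V: V\text{ a }\star\text{-valuation overring of }D\}$, and $\dim_v(R)$ is the classical valuative dimension (supremum of dimensions of valuation overrings of $R$). *)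

(* An integral domain D is represented as a subring of its
   quotient field K (every domain embeds into its fraction field).
   Subsets of K are predicates K -> Prop. *)
From HB Require Import structures.
From mathcomp Require Import all_boot all_order all_algebra.
Set Implicit Arguments. Unset Strict Implicit. Unset Printing Implicit Defensive.
Import GRing.Theory.
Local Open Scope ring_scope.

Section Defs.
Variable K : fieldType.
Local Notation set := (K -> Prop).

Definition subset (A B : set) : Prop := forall x, A x -> B x.
Definition seteq (A B : set) : Prop := forall x, A x <-> B x.

Definition subring (R : set) : Prop :=
  R 0 /\ R 1 /\ (forall x y, R x -> R y -> R (x - y)) /\
  (forall x y, R x -> R y -> R (x * y)).

Definition domain_with_qf (D : set) : Prop :=
  subring D /\ forall x : K, exists a b, D a /\ D b /\ b != 0 /\ x = a / b.

Definition submodule (R E : set) : Prop :=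
  E 0 /\ (forall x y, E x -> E y -> E (x + y)) /\
  (forall r x, R r -> E x -> E (r * x)).

Definition nonzero (E : set) : Prop := exists x, E x /\ x != 0.

Definition Fbar (D E : set) : Prop := submodule D E /\ nonzero E.

Fixpoint span (D : set) (s : seq K) (x : K) : Prop :=
  match s with
  | [::] => x = 0
  | a :: s' => exists d y, D d /\ span D s' y /\ x = d * a + y
  end.

Definition fgfrac (D E : set) : Prop :=
  (exists s : seq K, seteq E (span D s)) /\ nonzero E.

Definition scale (x : K) (E : set) : set := fun y => exists e, E e /\ y = x * e.

Definition semistar (D : set) (star : set -> set) : Prop :=
  (forall E, Fbar D E -> Fbar D (star E)) /\
  (forall x E, x != 0 -> Fbar D E -> seteq (star (scale x E)) (scale x (star E))) /\
  (forall E F, Fbar D E -> Fbar D F -> subset E F -> subset (star E) (star F)) /\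
  (forall E, Fbar D E -> subset E (star E)) /\
  (forall E, Fbar D E -> seteq (star (star E)) (star E)).

Definition star_f (D : set) (star : set -> set) : set -> set :=
  fun E x => exists F, fgfrac D F /\ subset F E /\ star F x.

Inductive fsum (P : set) : set :=
  | fsum0 : fsum P 0
  | fsumS a x : P a -> fsum P x -> fsum P (a + x).

Definition prodm (E F : set) : set :=
  fsum (fun y => exists e f, E e /\ F f /\ y = e * f).

Definition ideal (D I : set) : Prop := subset I D /\ submodule D I /\ nonzero I.

Definition quasi_ideal (D : set) (star : set -> set) (I : set) : Prop :=
  ideal D I /\ seteq (fun x => star I x /\ D x) I.

Definition prime_in (R I : set) : Prop :=
  ~ I 1 /\ forall a b, R a -> R b -> I (a * b) -> I a \/ I b.

Definition QSpec (D : set) (star : set -> set) (P : set) : Prop :=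
  quasi_ideal D star P /\ prime_in D P.

Definition QMax (D : set) (star : set -> set) (M : set) : Prop :=
  quasi_ideal D star M /\ ~ M 1 /\
  forall J, quasi_ideal D star J -> ~ J 1 -> subset M J -> subset J M.

Definition localize (D P : set) : set :=
  fun x => exists a s, D a /\ D s /\ ~ P s /\ x = a / s.

Definition stilde (D : set) (star : set -> set) : set -> set :=
  fun E x => forall M, QMax D (star_f D star) M -> prodm E (localize D M) x.

Definition valuation_overring (R V : set) : Prop :=
  subring V /\ subset R V /\ forall x : K, x != 0 -> V x \/ V x^-1.

Definition star_val_overring (D : set) (star : set -> set) (V : set) : Prop :=
  valuation_overring D V /\ forall F, fgfrac D F -> subset (star F) (prodm F V).

Definition prime_ideal (V I : set) : Prop :=
  subset I V /\ submodule V I /\ prime_in V I.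

(* Extended naturals are represented by their "at least n" predicates:
   a value e : nat -> Prop with e n <-> (value >= n). *)

Definition krull_dim (V : set) : nat -> Prop :=
  fun n => exists p : nat -> set,
    (forall i, (i <= n)%N -> prime_ideal V (p i)) /\
    (forall i, (i < n)%N -> subset (p i) (p i.+1) /\ ~ subset (p i.+1) (p i)).

(* supremum (with sup of the empty family = 0) *)
Definition esup (I : Type) (P : I -> Prop) (G : I -> nat -> Prop) : nat -> Prop :=
  fun n => n = 0%N \/ exists i, P i /\ G i n.

Definition valdim (R : set) : nat -> Prop :=
  esup (valuation_overring R) krull_dim.

Definition star_dimv (D : set) (star : set -> set) : nat -> Prop :=
  esup (star_val_overring D star) krull_dim.

End Defs.

(* Both sides are suprema of Krull dimensions of valuation rings, and the
   proof matches the valuation rings occurring on each side.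
   - A ~star-valuation overring V of positive dimension has a nonzero
     center P = D \cap m_V; P is a quasi-~star-prime and V is a valuation
     overring of D_P  (lemmas [center_ideal], [center_prime],
     [center_quasi], [localize_center_sub]).
   - Conversely, a quasi-~star-prime P lies in a quasi-star_f-maximal
     ideal M, so every valuation overring V of D_P contains D_M, and
     F^{~star} \subseteq F D_M \subseteq FV  ([quasi_tilde_sub_QMax]). *)
From Pilot Require
Import Defs.
From HB Require Import structures.
From mathcomp Require Import all_boot all_order all_algebra.
From mathcomp Require boolp classical_sets.
From Stdlib Require Import Classical.
(* Re-imported so that [subset] denotes the Defs notion, not fintype's. *)
Import Defs.
Set Implicit Arguments. Unset Strict Implicit. Unset Printing Implicit Defensive.
Import GRing.Theory.
Local Open Scope ring_scope.

(* Zorn's lemma for families of subsets of a type in which every nonempty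
   chain has its union in the family (the library version also asks this of
   the empty chain, which is excluded for families of nonzero ideals). *)
Lemma zorn_nonempty_chains (T : Type) (P : (T -> Prop) -> Prop) :
  (exists A, P A) ->
  (forall C : (T -> Prop) -> Prop, (forall A, C A -> P A) ->
     (forall A B, C A -> C B ->
        classical_sets.subset A B \/ classical_sets.subset B A) ->
     (exists A, C A) -> P (fun x => exists A, C A /\ A x)) ->
  exists M, P M /\
    forall J, P J -> classical_sets.subset M J -> classical_sets.subset J M.
Proof.
move=> [A0 PA0] Pchain.
pose le (a b : {A | P A}) := boolp.asbool (classical_sets.subset (sval a) (sval b)).
have [|||[M PM] Mmax] := classical_sets.ZL_preorder (exist _ A0 PA0) (R := le).
- by move=> a; apply/boolp.asboolP.
- by move=> a b c /boolp.asboolP hab /boolp.asboolP hbc; apply/boolp.asboolP => x /hab /hbc.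
- move=> F Ftot; have [[a0 Fa0]|Fempty] := classic (exists a, F a); last first.
    by exists (exist _ A0 PA0) => a Fa; exfalso; apply: Fempty; exists a.
  pose C A := exists a, F a /\ sval a = A.
  have PU : P (fun x => exists A, C A /\ A x).
    apply: Pchain.
    - by move=> _ [a [_ <-]]; exact: (svalP a).
    - move=> _ _ [a [Fa <-]] [b [Fb <-]].
      by case: (Ftot _ _ Fa Fb) => /boolp.asboolP; [left|right].
    - by exists (sval a0), a0.
  exists (exist _ _ PU) => a Fa; apply/boolp.asboolP => x ax /=.
  by exists (sval a); split => //; exists a.
- exists M; split => // J PJ MJ.
  by have /boolp.asboolP := Mmax (exist _ J PJ) (boolp.asboolT MJ).
Qed.

Lemma chain_finite_bound (T : eqType) (C : (T -> Prop) -> Prop) (s : seq T) :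
  (forall A B, C A -> C B -> classical_sets.subset A B \/ classical_sets.subset B A) ->
  (exists A, C A) -> (forall a, a \in s -> exists A, C A /\ A a) ->
  exists A, C A /\ forall a, a \in s -> A a.
Proof.
move=> chC [A0 CA0]; elim: s => [|a s IH] h; first by exists A0.
have [|A [CA hA]] := IH; first by move=> b hb; apply: h; rewrite inE hb orbT.
have [B [CB hB]] := h a (mem_head _ _).
case: (chC _ _ CA CB) => hAB.
- by exists B; split => // b; rewrite inE => /orP [/eqP ->|/hA /hAB].
- by exists A; split => // b; rewrite inE => /orP [/eqP ->|/hA]; [exact: hAB|].
Qed.

Section Modules.
Variable K : fieldType.
Implicit Types (A B E F S : K -> Prop).

Lemma seteqE A B : seteq A B -> A = B.
Proof. by move=> h; apply: boolp.funext => x; apply: boolp.propext. Qed.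

Lemma prodm_in E F e f : E e -> F f -> prodm E F (e * f).
Proof. by move=> he hf; rewrite -[e * f]addr0; apply: fsumS; [exists e, f|exact: fsum0]. Qed.

Lemma prodm_mono E E' F F' :
  subset E E' -> subset F F' -> subset (prodm E F) (prodm E' F').
Proof.
move=> hE hF x; elim=> [|a y [e [f [he [hf ->]]]] _ IH]; first exact: fsum0.
by apply: fsumS => //; exists e, f; split; [exact: hE|split; [exact: hF|]].
Qed.

Lemma prodm_sub E F S : S 0 -> (forall x y, S x -> S y -> S (x + y)) ->
  (forall e f, E e -> F f -> S (e * f)) -> subset (prodm E F) S.
Proof.
move=> S0 Sadd Sp x; elim=> [//|a y [e [f [he [hf ->]]]] _ IH].
by apply: Sadd => //; apply: Sp.
Qed.

Lemma nonzero_sub E F : subset E F -> nonzero E -> nonzero F.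
Proof. by move=> h [e [he e0]]; exists e; split => //; apply: h. Qed.

Section Subring.
Variable R : K -> Prop.
Hypothesis HR : subring R.

Lemma sr0 : R 0. Proof. by case: HR. Qed.
Lemma sr1 : R 1. Proof. by case: HR => _ []. Qed.
Lemma srB x y : R x -> R y -> R (x - y). Proof. by case: HR => _ [_ []] h _; apply: h. Qed.
Lemma srM x y : R x -> R y -> R (x * y). Proof. by case: HR => _ [_ []] _ h; apply: h. Qed.
Lemma srN x : R x -> R (- x). Proof. by move=> h; rewrite -sub0r; apply: srB => //; apply: sr0. Qed.
Lemma srD x y : R x -> R y -> R (x + y).
Proof. by move=> hx hy; rewrite -[y]opprK; apply: srB => //; apply: srN. Qed.

Lemma span0 s : span R s 0.
Proof.
elim: s => [//|a s IH] /=; exists 0, 0; split; first exact: sr0.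
by split => //; rewrite mul0r addr0.
Qed.

Lemma span_submodule s : submodule R (span R s).
Proof.
split; first exact: span0.
elim: s => [|a s [IHa IHm]] /=.
  by split; [move=> x y -> ->; rewrite addr0 | move=> r x _ ->; rewrite mulr0].
split.
- move=> x y [d [u [Rd [Su ->]]]] [d' [u' [Rd' [Su' ->]]]].
  exists (d + d'), (u + u'); split; first exact: srD.
  split; first exact: IHa.
  by rewrite mulrDl -!addrA; congr (_ + _); rewrite addrCA.
- move=> r x Rr [d [u [Rd [Su ->]]]]; exists (r * d), (r * u); split; first exact: srM.
  by split; [exact: IHm|rewrite mulrDr mulrA].
Qed.

Lemma span_in s a : a \in s -> span R s a.
Proof.
elim: s => [//|b s IH] /=; rewrite inE => /orP [/eqP ->| /IH h].
  by exists 1, 0; split; [exact: sr1|split; [exact: span0|rewrite mul1r addr0]].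
by exists 0, a; split; [exact: sr0|split => //; rewrite mul0r add0r].
Qed.

Lemma span_sub s E : submodule R E -> (forall a, a \in s -> E a) -> subset (span R s) E.
Proof.
move=> [E0 [Eadd Emul]]; elim: s => [|b s IH] h x /=; first by move->.
move=> [d [y [Rd [Sy ->]]]]; apply: Eadd.
  by apply: Emul => //; apply: h; rewrite inE eqxx.
by apply: (IH _ y) => // a ha; apply: h; rewrite inE ha orbT.
Qed.

Lemma span_incl s t : {subset s <= t} -> subset (span R s) (span R t).
Proof. by move=> h; apply: span_sub; [exact: span_submodule|move=> a /h; apply: span_in]. Qed.

Lemma span_catl s t : subset (span R s) (span R (s ++ t)).
Proof. by apply: span_incl => a ha; rewrite mem_cat ha. Qed.

Lemma span_catr s t : subset (span R t) (span R (s ++ t)).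
Proof. by apply: span_incl => a ha; rewrite mem_cat ha orbT. Qed.

Lemma span_scale b s : span R [seq b * g | g <- s] = scale b (span R s).
Proof.
apply: seteqE => x; split.
- elim: s x => [|a s IH] x /=; first by move->; exists 0; rewrite mulr0.
  move=> [d [y [Rd [Sy ->]]]]; have [e [Se ->]] := IH _ Sy.
  exists (d * a + e); split; first by exists d, e.
  by rewrite mulrDr mulrCA.
- move=> [e [Se ->]]; elim: s e Se => [|a s IH] e /=; first by move->; rewrite mulr0.
  move=> [d [y [Rd [Sy ->]]]]; exists d, (b * y); split => //.
  by split; [exact: IH|rewrite mulrDr mulrCA].
Qed.

Lemma span_scale_nonzero b s : b != 0 -> nonzero (span R s) ->
  nonzero (span R [seq b * g | g <- s]).
Proof.
move=> b0 [e [he e0]]; rewrite span_scale.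
by exists (b * e); split; [exists e|rewrite mulf_neq0].
Qed.

Lemma span1_nonzero e : e != 0 -> nonzero (span R [:: e]).
Proof. by move=> e0; exists e; split => //; apply: span_in; rewrite inE eqxx. Qed.

End Subring.

Definition vmax (V : K -> Prop) (x : K) : Prop := V x /\ (x = 0 \/ ~ V x^-1).

Section ValuationRing.
Variable V : K -> Prop.
Hypothesis sV : subring V.
Hypothesis vV : forall x : K, x != 0 -> V x \/ V x^-1.

Lemma vmax0 : vmax V 0.
Proof. by split; [exact: sr0|left]. Qed.

Lemma vmax_not1 : ~ vmax V 1.
Proof. by move=> [_ [/eqP|]]; [rewrite oner_eq0|rewrite invr1; apply; exact: sr1]. Qed.

Lemma vmax_mul v m : V v -> vmax V m -> vmax V (v * m).
Proof.
move=> Vv [Vm hm]; split; first exact: srM.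
have [->|vm0] := eqVneq (v * m) 0; first by left.
right => h; move: vm0; rewrite mulf_eq0 negb_or => /andP [v0 m0].
case: hm => [m0'|nm]; first by move: m0; rewrite m0' eqxx.
by apply: nm; rewrite -[m^-1](mulVKf v0) -invfM; apply: srM.
Qed.

(* If x, y are non-units, then so is x + y: otherwise, comparing x and y in
   V, (x + y)^-1 times (1 + x/y) or (1 + y/x) would invert y or x. *)
Lemma vmax_add x y : vmax V x -> vmax V y -> vmax V (x + y).
Proof.
have inv_from_sum u w : u != 0 -> u + w != 0 -> V (w / u) -> V (u + w)^-1 -> V u^-1.
  move=> u0 uw0 Vwu Vi; have -> : u^-1 = (w / u + 1) * (u + w)^-1.
    by rewrite -[1](divff u0) -mulrDl addrC mulrAC divff // mul1r.
  by apply: srM => //; apply: srD => //; exact: sr1.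
move=> [Vx hx] [Vy hy]; split; first exact: srD.
have [->|xy0] := eqVneq (x + y) 0; first by left.
right => Vi.
case: hx => [x0|nx]; first by move: Vi xy0 hy; rewrite x0 add0r => Vi /eqP y0 [].
case: hy => [y0|ny]; first by move: Vi; rewrite y0 addr0.
have x0 : x != 0 by apply/eqP => x0; apply: nx; rewrite x0 invr0; exact: sr0.
have y0 : y != 0 by apply/eqP => y0; apply: ny; rewrite y0 invr0; exact: sr0.
have [Vxy|Vyx] := vV (mulf_neq0 x0 (invr_neq0 y0)).
  by apply: ny; apply: (inv_from_sum y x) => //; rewrite addrC.
by apply: nx; apply: (inv_from_sum x y) => //; rewrite invf_div in Vyx.
Qed.

Lemma vmaxN_unit s : V s -> ~ vmax V s -> s != 0 /\ V s^-1.
Proof.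
move=> Vs nM; split; first by apply/eqP => s0; apply: nM; rewrite s0; exact: vmax0.
by apply: NNPP => h; apply: nM; split => //; right.
Qed.

Lemma vmax_prime a b : V a -> V b -> vmax V (a * b) -> vmax V a \/ vmax V b.
Proof.
move=> Va Vb hab; apply: NNPP => hn.
have [a0 Vai] := vmaxN_unit Va (fun h => hn (or_introl h)).
have [b0 Vbi] := vmaxN_unit Vb (fun h => hn (or_intror h)).
case: hab => _ [/eqP|]; first by rewrite mulf_eq0 (negbTE a0) (negbTE b0).
by apply; rewrite invfM; apply: srM.
Qed.

Lemma vmax_nonzero n : krull_dim V n -> (0 < n)%N -> exists y, y != 0 /\ vmax V y.
Proof.
move=> [p [pp pc]] n0.
have [_ p10] := pc 0%N n0.
have [p1V [[_ [_ p1m]] [np11 _]]] := pp 1%N n0.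
have [_ [[p00 _] _]] := pp 0%N (leq0n n).
have [y [p1y np0y]] : exists y, p 1%N y /\ ~ p 0%N y.
  by apply: NNPP => h; apply: p10 => y hy; apply: NNPP => hn; apply: h; exists y.
have y0 : y != 0 by apply/eqP => y0; apply: np0y; rewrite y0.
exists y; split => //; split; first exact: p1V.
by right => Vi; apply: np11; rewrite -(mulVf y0); apply: p1m.
Qed.

End ValuationRing.

Lemma prodm_localize_denominator (D E P : K -> Prop) x :
  subring D -> subset E D -> submodule D E -> P 0 -> prime_in D P ->
  prodm E (localize D P) x -> exists s, D s /\ ~ P s /\ E (s * x).
Proof.
move=> HD ED [E0 [Eadd Emul]] P0 [nP1 Pprime].
elim=> [|a y [e [f [he [[c [t [Dc [Dt [nPt ->]]]]] ->]]]] _ [s [Ds [nPs Esy]]]].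
  by exists 1; split; [exact: (sr1 HD)|split => //; rewrite mulr0].
have t0 : t != 0 by apply/eqP => t0; apply: nPt; rewrite t0.
exists (t * s); split; first exact: (srM HD).
split; first by case/(Pprime _ _ Dt Ds).
rewrite mulrDr; apply: Eadd; last by rewrite -mulrA; apply: Emul.
have -> : t * s * (e * (c / t)) = s * c * e.
  by rewrite [e * _]mulrC mulrA; congr (_ * _); rewrite mulrAC [t * _]mulrC divfK // mulrC.
by apply: Emul => //; apply: (srM HD).
Qed.

End Modules.

Section FiniteType.
Variable K : fieldType.
Variables (D : K -> Prop) (star : (K -> Prop) -> (K -> Prop)).
Hypothesis HD : subring D.
Hypothesis Hs : semistar D star.
Implicit Types (E F G I J M N : K -> Prop).
Local Notation sf := (star_f D star).

Lemma star_mono E F : Fbar D E -> Fbar D F -> subset E F -> subset (star E) (star F).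
Proof. by case: Hs => _ [_ [h _]]; apply: h. Qed.
Lemma star_ext E : Fbar D E -> subset E (star E).
Proof. by case: Hs => _ [_ [_ [h _]]]; apply: h. Qed.
Lemma star_idem E : Fbar D E -> star (star E) = star E.
Proof. by case: Hs => _ [_ [_ [_ h]]] hE; apply: seteqE; apply: h. Qed.
Lemma star_scale x E : x != 0 -> Fbar D E -> star (scale x E) = scale x (star E).
Proof. by case: Hs => _ [h _] hx hE; apply: seteqE; apply: h. Qed.
Lemma star_Fbar E : Fbar D E -> Fbar D (star E).
Proof. by case: Hs => h _; apply: h. Qed.
Lemma star_submodule E : Fbar D E -> submodule D (star E).
Proof. by move/star_Fbar => []. Qed.

Lemma span_Fbar s : nonzero (span D s) -> Fbar D (span D s).
Proof. by move=> h; split => //; apply: span_submodule. Qed.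
Lemma span_fgfrac s : nonzero (span D s) -> fgfrac D (span D s).
Proof. by move=> h; split => //; exists s. Qed.
Lemma fgfracE F : fgfrac D F -> exists s, F = span D s /\ nonzero (span D s).
Proof. by move=> [[s /seteqE ->] nz]; exists s. Qed.

Lemma span_cat_sub s t E : submodule D E ->
  subset (span D s) E -> subset (span D t) E -> subset (span D (s ++ t)) E.
Proof.
move=> sE hs ht; apply: span_sub => // a; rewrite mem_cat => /orP [] ha.
  by apply: hs; apply: span_in.
by apply: ht; apply: span_in.
Qed.

Lemma sf_mono E F : subset E F -> subset (sf E) (sf F).
Proof. by move=> h x [G [fG [GE sG]]]; exists G; split => //; split => // y /GE /h. Qed.

Lemma sf_ext E : submodule D E -> nonzero E -> subset E (sf E).
Proof.
move=> hE [e [he e0]] x hx.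
have [->|x0] := eqVneq x 0.
  exists (span D [:: e]); split; first exact/span_fgfrac/span1_nonzero.
  split; first by apply: span_sub => // a; rewrite inE => /eqP ->.
  by case: (star_submodule (span_Fbar (span1_nonzero HD e0))).
exists (span D [:: x]); split; first exact/span_fgfrac/span1_nonzero.
split; first by apply: span_sub => // a; rewrite inE => /eqP ->.
by apply: star_ext; [exact/span_Fbar/span1_nonzero|apply: span_in => //; rewrite inE eqxx].
Qed.

Lemma sf_common_witness E : submodule D E -> nonzero E ->
  forall s : seq K, (forall a, a \in s -> sf E a) ->
  exists t, subset (span D t) E /\ nonzero (span D t) /\
            forall a, a \in s -> star (span D t) a.
Proof.
move=> hE [e [he e0]]; elim=> [|a s IH] h.
  exists [:: e]; split; first by apply: span_sub => // b; rewrite inE => /eqP ->.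
  by split => //; exact: span1_nonzero.
have [|t [tE [nt st]]] := IH; first by move=> b hb; apply: h; rewrite inE hb orbT.
have [F [fF [FE sF]]] := h a (mem_head _ _).
have [ta [eta nta]] := fgfracE fF; subst F.
have nat : nonzero (span D (ta ++ t)) by apply: nonzero_sub nta; apply: span_catl.
exists (ta ++ t); split; first exact: span_cat_sub.
split => // b; rewrite inE => /orP [/eqP ->|hb].
  exact: (star_mono (span_Fbar nta) (span_Fbar nat) (@span_catl _ _ HD _ _)).
by apply: (star_mono (span_Fbar nt) (span_Fbar nat) (@span_catr _ _ HD _ _)); apply: st.
Qed.

Lemma sf_submodule E : submodule D E -> nonzero E -> submodule D (sf E).
Proof.
move=> hE nE; split; first by apply: sf_ext => //; case: hE.
split.
- move=> x y hx hy.
  have [|t [tE [nt st]]] := sf_common_witness hE nE (s := [:: x; y]).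
    by move=> a; rewrite !inE => /orP [] /eqP ->.
  exists (span D t); split; first exact: span_fgfrac.
  split => //; have [_ [Sadd _]] := star_submodule (span_Fbar nt).
  by apply: Sadd; apply: st; rewrite !inE eqxx ?orbT.
- move=> r x Dr [F [fF [FE sF]]]; exists F; split => //; split => //.
  have [s [eF ns]] := fgfracE fF; subst F.
  by have [_ [_ Smul]] := star_submodule (span_Fbar ns); apply: Smul.
Qed.

Lemma sf_idem E : submodule D E -> nonzero E -> subset (sf (sf E)) (sf E).
Proof.
move=> hE nE x [F [fF [FE sF]]].
have [s [es ns]] := fgfracE fF; subst F.
have [t [tE [nt st]]] := sf_common_witness hE nE (fun a ha => FE a (span_in HD ha)).
exists (span D t); split; first exact: span_fgfrac.
split => //; rewrite -(star_idem (span_Fbar nt)).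
apply: (star_mono (span_Fbar ns) (star_Fbar (span_Fbar nt))) sF.
by apply: span_sub => //; apply: star_submodule; apply: span_Fbar.
Qed.

Definition qclose N : K -> Prop := fun x => sf N x /\ D x.

Lemma qclose_quasi N : ideal D N -> quasi_ideal D sf (qclose N) /\ subset N (qclose N).
Proof.
move=> [ND [sN nN]].
have Nq : subset N (qclose N) by move=> x hx; split; [apply: sf_ext|apply: ND].
have sq : submodule D (qclose N).
  have [S0 [Sadd Smul]] := sf_submodule sN nN.
  split; first by split => //; exact: (sr0 HD).
  split=> [x y [? ?] [? ?]|r x Dr [? ?]]; split; by [apply: Sadd|apply: (srD HD)|apply: Smul|apply: (srM HD)].
split => //; split; first by split; [move=> x []|split => //; exact: nonzero_sub nN].
move=> x; split; last by move=> hx; split; [exact: sf_ext (nonzero_sub Nq nN) _ hx|case: hx].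
move=> [h Dx]; split => //; apply: (sf_idem sN nN); apply: (sf_mono _ h); by move=> y [].
Qed.

Lemma quasi_sf1 J : quasi_ideal D sf J -> sf J 1 -> J 1.
Proof. by move=> [_ qJ] h; apply: (qJ 1).1; split => //; exact: (sr1 HD). Qed.

Lemma quasi_avoid J g : quasi_ideal D sf J -> ~ J 1 ->
  nonzero (span D g) -> star (span D g) 1 -> exists a, a \in g /\ ~ J a.
Proof.
move=> qJ nJ1 ng sg; apply: NNPP => hn; apply/nJ1/(quasi_sf1 qJ).
exists (span D g); split; first exact: span_fgfrac.
split => //; apply: span_sub => //; first by case: qJ => [[_ []]].
by move=> a ag; apply: NNPP => nJa; apply: hn; exists a.
Qed.

Lemma QMax_ideal M : QMax D sf M -> ideal D M.
Proof. by case=> [[]]. Qed.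

Definition add_principal M a : K -> Prop :=
  fun x => exists m d, M m /\ D d /\ x = m + d * a.

Lemma add_principal_ideal M a : ideal D M -> D a ->
  ideal D (add_principal M a) /\ subset M (add_principal M a) /\ add_principal M a a.
Proof.
move=> [MD [[M0 [Madd Mmul]] nM]] Da.
have MN : subset M (add_principal M a).
  by move=> m hm; exists m, 0; split => //; split; [exact: (sr0 HD)|rewrite mul0r addr0].
split; last first.
  by split => //; exists 0, 1; split => //; split; [exact: (sr1 HD)|rewrite add0r mul1r].
split; first by move=> x [m [d [hm [Dd ->]]]]; apply: (srD HD); [exact: MD|exact: (srM HD)].
split; last exact: nonzero_sub nM.
split; first exact: MN.
split.
- move=> x y [m [d [hm [Dd ->]]]] [m' [d' [hm' [Dd' ->]]]].
  exists (m + m'), (d + d'); split; first exact: Madd.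
  split; first exact: (srD HD).
  by rewrite mulrDl -!addrA; congr (_ + _); rewrite addrCA.
- move=> r x Dr [m [d [hm [Dd ->]]]]; exists (r * m), (r * d).
  by split; [exact: Mmul|split; [exact: (srM HD)|rewrite mulrDr mulrA]].
Qed.

(* Quasi-star_f-maximal ideals are prime: if ab is in M and a is not, then
   either N = M + Da is contained in a proper quasi-ideal (contradicting
   maximality), or 1 lies in star G for some finitely generated G inside N;
   then bG lies in M and b lies in star (bG), so b is in M. *)
Lemma QMax_prime M : QMax D sf M -> prime_in D M.
Proof.
move=> [[iM qM] [nM1 maxM]]; split => // a b Da Db Mab.
have [Ma|Ma] := classic (M a); [by left|right].
have [_ [[M0 [Madd Mmul]] _]] := iM.
have [->|b0] := eqVneq b 0; first by [].
pose N := add_principal M a.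
have [iN [MN Na]] := add_principal_ideal iM Da.
have [[G [fG [GN sG]]]|nN1] := classic (sf N 1); last first.
  have [qN NqN] := qclose_quasi iN; exfalso; apply: Ma; apply: (maxM _ qN).
  - by move=> [].
  - by move=> x /MN /NqN.
  - exact: NqN.
have [s [es ns]] := fgfracE fG; subst G.
have nbs := span_scale_nonzero b0 ns.
have bsM : subset (span D [seq b * g | g <- s]) M.
  apply: span_sub => // y /mapP [g gs ->].
  have [m [d [hm [Dd ->]]]] := GN _ (span_in HD gs).
  rewrite mulrDr; apply: Madd; first exact: Mmul.
  by rewrite mulrCA; apply: Mmul => //; rewrite mulrC.
apply: (qM b).1; split => //; exists (span D [seq b * g | g <- s]).
split; first exact: span_fgfrac.
split => //; rewrite span_scale // star_scale //; last exact: span_Fbar.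
by exists 1; split => //; rewrite mulr1.
Qed.

(* The union of a nonempty chain of ideals J with 1 outside J^{star_f} is
   again such an ideal: a finitely generated ideal inside the union lies in
   a single member of the chain. *)
Lemma chain_union_ideal (C : (K -> Prop) -> Prop) :
  (forall A, C A -> ideal D A /\ ~ sf A 1) ->
  (forall A B, C A -> C B -> subset A B \/ subset B A) -> (exists A, C A) ->
  ideal D (fun x => exists A, C A /\ A x) /\ ~ sf (fun x => exists A, C A /\ A x) 1.
Proof.
move=> hC chC [A0 CA0]; pose U x := exists A, C A /\ A x.
have [[_ [sA0 nA0]] _] := hC _ CA0.
have sA A : C A -> submodule D A by move=> /hC [[_ []]].
have bound s := chain_finite_bound (s := s) chC (ex_intro _ A0 CA0).
split; last first.
  move=> [F [fF [FU sF]]]; have [s [es ns]] := fgfracE fF; subst F.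
  have [A [CA hA]] := bound s (fun a ha => FU _ (span_in HD ha)).
  have [_ nA1] := hC _ CA; apply: nA1.
  by exists (span D s); split => //; split => //; apply: span_sub => //; exact: sA.
split; first by move=> x [A [CA hx]]; have [[AD _] _] := hC _ CA; exact: AD.
split; last by apply: nonzero_sub nA0 => x hx; exists A0.
split; first by exists A0; split => //; case: sA0.
split=> [x y [A [CA hx]] [B [CB hy]]|r x Dr [A [CA hx]]].
  have [|A' [CA' hA']] := bound [:: x; y].
    by move=> c; rewrite !inE => /orP [] /eqP ->; [exists A|exists B].
  have [_ [Aadd _]] := sA _ CA'.
  by exists A'; split => //; apply: Aadd; apply: hA'; rewrite !inE eqxx ?orbT.
by exists A; split => //; have [_ [_ Amul]] := sA _ CA; apply: Amul.
Qed.

(* Every ideal I with 1 outside I^{star_f} lies in a quasi-star_f-maximal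
   ideal: Zorn's lemma gives an ideal M maximal among those containing I
   with 1 outside M^{star_f}, and such an M is its own quasi-closure. *)
Lemma QMax_exists I : ideal D I -> ~ sf I 1 -> exists M, QMax D sf M /\ subset I M.
Proof.
move=> iI nI1.
pose Fam J := ideal D J /\ ~ sf J 1 /\ subset I J.
have chainFam C : (forall A, C A -> Fam A) ->
    (forall A B, C A -> C B -> subset A B \/ subset B A) -> (exists A, C A) ->
    Fam (fun x => exists A, C A /\ A x).
  move=> hC chC neC; have [A0 CA0] := neC; have [_ [_ IA0]] := hC _ CA0.
  have [|iU nU1] := chain_union_ideal _ chC neC; first by move=> A /hC [? []].
  by split => //; split => // x /IA0 hx; exists A0.
have [M [[iM [nM1 IM]] maxM]] :=
  zorn_nonempty_chains (ex_intro Fam I (conj iI (conj nI1 (fun x h => h)))) chainFam.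
have [qM MqM] := qclose_quasi iM.
have qcFam J : quasi_ideal D sf J -> ~ J 1 -> subset M J -> Fam J.
  move=> qJ nJ1 MJ; split; first by case: qJ.
  by split; [move/(quasi_sf1 qJ)|move=> x /IM /MJ].
have nqM1 : ~ qclose M 1 by case.
have qMM := maxM _ (qcFam _ qM nqM1 MqM) MqM.
exists M; split => //; split; first by split => // x; split; [exact: qMM|exact: MqM].
have [_ [sM nM]] := iM.
split; first by move=> M1; apply: nM1; exact: sf_ext sM nM _ M1.
by move=> J qJ nJ1 MJ; apply: maxM => //; apply: qcFam.
Qed.

End FiniteType.

Section Tilde.
Variable K : fieldType.
Variables (D : K -> Prop) (star : (K -> Prop) -> (K -> Prop)).
Hypothesis HD : domain_with_qf D.
Hypothesis Hs : semistar D star.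
Let HDr : subring D := HD.1.
Local Notation sf := (star_f D star).
Local Notation st := (stilde D star).
Implicit Types (E F M P V : K -> Prop).

Lemma localize1 P : ~ P 1 -> localize D P 1.
Proof. by move=> h; exists 1, 1; rewrite divr1; split; [|split]; try exact: (sr1 HDr). Qed.

Lemma localize_inv P p : D p -> ~ P p -> localize D P p^-1.
Proof. by move=> Dp h; exists 1, p; rewrite mul1r; split; [exact: (sr1 HDr)|]. Qed.

Lemma clear_denominator y : exists b, D b /\ b != 0 /\ D (b * y).
Proof.
have [a [b [Da [Db [b0 ->]]]]] := HD.2 y.
by exists b; rewrite mulrCA divff // mulr1.
Qed.

(* Membership in E^{~star}: if x is in E^{~star} for an ideal E, then the
   conductor (E : x) contains a finitely generated ideal G with 1 in G^star,
   since otherwise (E : x) would lie in a quasi-star_f-maximal ideal M, while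
   x in E D_M gives an element of (E : x) outside M. *)
Lemma stilde_witness E x : ideal D E -> stilde D star E x ->
  exists g : seq K, nonzero (span D g) /\ star (span D g) 1 /\
                    forall a, a \in g -> D a /\ E (a * x).
Proof.
move=> [ED [sE nE]] hx; have [E0 [Eadd Emul]] := sE.
pose J := fun d => D d /\ E (d * x).
have iJ : ideal D J.
  split; first by move=> d [].
  split.
  - split; first by split; [exact: (sr0 HDr)|rewrite mul0r].
    split=> [a b [Da Ea] [Db Eb]|r a Dr [Da Ea]].
      by split; [exact: (srD HDr)|rewrite mulrDl; exact: Eadd].
    by split; [exact: (srM HDr)|rewrite -mulrA; exact: Emul].
  - have [e [he e0]] := nE; have [b [Db [b0 Dbx]]] := clear_denominator x.
    exists (e * b); split; last by rewrite mulf_neq0.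
    by split; [apply: (srM HDr) => //; exact: ED|rewrite -mulrA mulrC; exact: Emul].
have [[G [fG [GJ sG]]]|nJ1] := classic (sf J 1).
  have [g [eG ng]] := fgfracE fG; subst G; exists g; do 2!split => //.
  by move=> a ha; apply: GJ; apply: span_in ha.
have [M [qM JM]] := QMax_exists HDr Hs iJ nJ1.
have [_ [[M0 _] _]] := QMax_ideal qM.
have [s [Ds [nMs Esx]]] :=
  prodm_localize_denominator HDr ED sE M0 (QMax_prime HDr Hs qM) (hx M qM).
by exfalso; apply: nMs; apply: JM.
Qed.

Definition center V : K -> Prop := fun x => D x /\ vmax V x.

Section Center.
Variable V : K -> Prop.
Hypothesis hV : valuation_overring D V.

Lemma center_submodule : submodule D (center V).
Proof.
have [sV [DV vV]] := hV.
split; first by split; [exact: (sr0 HDr)|exact: vmax0].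
split=> [x y [Dx Mx] [Dy My]|r x Dr [Dx Mx]].
  by split; [exact: (srD HDr)|exact: vmax_add].
by split; [exact: (srM HDr)|apply: vmax_mul => //; exact: DV].
Qed.

Lemma center_prime : prime_in D (center V).
Proof.
have [sV [DV vV]] := hV.
split; first by move=> [_ h]; exact: (vmax_not1 sV h).
move=> a b Da Db [_ Mab].
by case: (vmax_prime sV (DV _ Da) (DV _ Db) Mab) => h; [left|right].
Qed.

Lemma center_ideal n : krull_dim V n -> (0 < n)%N -> ideal D (center V).
Proof.
have [sV [DV vV]] := hV.
move=> kV n0; split; first by move=> x [].
split; first exact: center_submodule.
have [y [y0 My]] := vmax_nonzero kV n0.
have [b [Db [b0 Dby]]] := clear_denominator y.
exists (b * y); split; last by rewrite mulf_neq0.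
by split => //; apply: vmax_mul => //; exact: DV.
Qed.

Lemma localize_center_sub : subset (localize D (center V)) V.
Proof.
have [sV [DV vV]] := hV.
move=> x [c [s [Dc [Ds [nPs ->]]]]].
have [_ Vsi] := vmaxN_unit sV (DV _ Ds) (fun h => nPs (conj Ds h)).
by apply: (srM sV) => //; apply: DV.
Qed.

End Center.

(* The center P of a ~star-valuation overring V is a quasi-~star-ideal:
   for x in P^{~star} \cap D, the witness of [stilde_witness] yields a
   finitely generated F = xG inside P with x in F^{~star}, and
   F^{~star} is contained in FV, inside the maximal ideal of V. *)
Lemma center_quasi V : star_val_overring D st V -> ideal D (center V) ->
  quasi_ideal D st (center V).
Proof.
move=> [hV hstV] iP; split => // x; split; last first.
  move=> hx; split; last by case: hx.
  move=> M qM; rewrite -[x]mulr1; apply: prodm_in => //.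
  by apply: localize1; case: qM => _ [].
move=> [hx Dx]; split => //.
have [sV [DV vV]] := hV.
have [->|x0] := eqVneq x 0; first exact: vmax0.
have [g [ng [sg hg]]] := stilde_witness iP hx.
pose F := span D [seq x * a | a <- g].
have nF : nonzero F := span_scale_nonzero x0 ng.
have FP : subset F (center V).
  apply: span_sub => //; first exact: center_submodule.
  by move=> y /mapP [a ag ->]; rewrite mulrC; exact: (hg a ag).2.
have stF : st F x.
  move=> M [qM [nM1 _]]; have [a [ag nMa]] := quasi_avoid HDr qM nM1 ng sg.
  have [_ [[M0 _] _]] := qM.1.
  have a0 : a != 0 by apply/eqP => a0; apply: nMa; rewrite a0.
  rewrite -[x](mulfK a0); apply: prodm_in; first by apply: span_in => //; apply: map_f.
  by apply: localize_inv => //; exact: (hg a ag).1.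
apply: (prodm_sub (vmax0 sV) (vmax_add sV vV)) (hstV F (span_fgfrac nF) x stF).
by move=> e f /FP [_ Me] Vf; rewrite mulrC; apply: vmax_mul.
Qed.

Lemma localize_antimono P M : subset P M -> subset (localize D M) (localize D P).
Proof.
move=> PM x [c [s [Dc [Ds [nMs ->]]]]].
by exists c, s; do 3!split => //; move=> /PM.
Qed.

(* A proper quasi-~star-ideal P lies in some quasi-star_f-maximal ideal M:
   otherwise every M misses an element p of P, so 1 = p / p is in P D_M
   for all M, i.e. 1 is in P^{~star} \cap D = P. *)
Lemma quasi_tilde_sub_QMax P : quasi_ideal D st P -> ~ P 1 ->
  exists M, QMax D sf M /\ subset P M.
Proof.
move=> [[PD _] qP] nP1; apply: NNPP => hn; apply/nP1/(qP 1).1.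
split; last exact: (sr1 HDr).
move=> M qM.
have [p [Pp nMp]] : exists p, P p /\ ~ M p.
  apply: NNPP => h; apply: hn; exists M; split => // p Pp.
  by apply: NNPP => nMp; apply: h; exists p.
have [_ [[M0 _] _]] := QMax_ideal qM.
have p0 : p != 0 by apply/eqP => p0; apply: nMp; rewrite p0.
by rewrite -(mulfV p0); apply: prodm_in => //; apply: localize_inv => //; apply: PD.
Qed.

(* A ~star-valuation overring V of positive dimension gives the
   quasi-~star-prime center P, and V is a valuation overring of D_P. *)
Lemma dimv_le_sup n : star_dimv D st n ->
  esup (QSpec D st) (fun P => valdim (localize D P)) n.
Proof.
case=> [->|[V [hstV kV]]]; first by left.
have [->|n0] := posnP n; first by left.
have hV := hstV.1; have [sV [_ vV]] := hV.
have iP := center_ideal hV kV n0.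
right; exists (center V); split; first by split; [exact: center_quasi|exact: center_prime].
right; exists V; split => //.
by split => //; split; [exact: localize_center_sub|].
Qed.

(* Conversely, a valuation overring V of D_P with P a quasi-~star-prime
   contains D_M for a quasi-star_f-maximal M above P, hence
   F^{~star} \subseteq F D_M \subseteq FV for all F in f(D). *)
Lemma sup_le_dimv n : esup (QSpec D st) (fun P => valdim (localize D P)) n ->
  star_dimv D st n.
Proof.
case=> [->|[P [[qP [nP1 _]] [->|[V [[sV [PV vV]] kV]]]]]]; try by left.
right; exists V; split => //.
have [M [qM PM]] := quasi_tilde_sub_QMax qP nP1.
split.
  split => //; split => // d Dd; apply: PV; exists d, 1.
  by rewrite divr1; do 2!split => //; exact: (sr1 HDr).
move=> F fF x hx; apply: (prodm_mono (E := F) (F := localize D M)) (hx M qM) => //.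
by move=> y /(localize_antimono PM) /PV.
Qed.

End Tilde.

Theorem lemma2p5 (K : fieldType) (D : K -> Prop) (star : (K -> Prop) -> (K -> Prop)) :
  domain_with_qf D -> semistar D star ->
  forall n : nat,
    star_dimv D (stilde D star) n <->
    esup (QSpec D (stilde D star)) (fun P => valdim (localize D P)) n.
Proof. by move=> HD Hs n; split; [exact: dimv_le_sup|exact: sup_le_dimv]. Qed.
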